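(* Let $n\ge 4$ and let $D_n$ be the tree on vertex set $\{1,\ldots,n\}$ with edges $\{1,3\}$, $\{2,3\}$ and $\{i,i+1\}$ for $3\le i\le n-1$, with adjacency matrix $A$. Let $e$ be the all-ones vector of length $n$ and $W(D_n)=[e,Ae,\ldots,A^{n-1}e]$. Then $\operatorname{rank} W(D_n)=n-1$ if $4\nmid n$, and $\operatorname{rank} W(D_n)=n-2$ if $4\mid n$.
   Context: $W(D_n)$ is the walk matrix of $D_n$. *)

From mathcomp Require Import all_boot all_algebra.
Set Implicit Arguments. Unset Strict Implicit. Unset Printing Implicit Defensive.
Import GRing.Theory.
Local Open Scope ring_scope.

(* Vertices 1..n of the paper are represented by 'I_n, vertex k+1 <-> index k.
   Edges of D_n: {1,3}, {2,3}, {i,i+1} for 3 <= i <= n-1, i.e. (0-based)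
   {0,2}, {1,2}, {j,j+1} for 2 <= j <= n-2. *)
Definition Dn_edge (a b : nat) : bool :=
  [|| [&& a == 0%N & b == 2%N],
      [&& a == 1%N & b == 2%N] |
      [&& (2 <= a)%N & b == a.+1]].

Definition Dn_adj (n : nat) (i j : 'I_n) : bool := Dn_edge i j || Dn_edge j i.

Definition adjD (n : nat) : 'M[rat]_n := \matrix_(i, j) (Dn_adj i j)%:R.

Definition walk_matrix (n : nat) (A : 'M[rat]_n) : 'M[rat]_n :=
  \matrix_(i, k) ((A ^+ k *m (const_mx 1 : 'cV[rat]_n)) i ord0).

From mathcomp Require Import all_boot all_algebra.
From mathcomp Require Import zify ring lra.
Set Implicit Arguments. Unset Strict Implicit. Unset Printing Implicit Defensive.
Import GRing.Theory Num.Theory.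
Local Open Scope ring_scope.

(* rank W = n - dim {u | u A^k e = 0 for k < n}, and we compute this left
   kernel (vertices are 0-based, 2 being the branch vertex). Starting from
   F_0 = Ae - 2e and F_1 = - F_0, the recurrence F_(w+2) = A F_(w+1) - F_w
   produces sparse vectors F_w in span(e, ..., A^(w+1) e). Orthogonality to
   them forces u_2 = 0, u_(v+2) = - u_v along the path, u_0 + u_1 = - u_(n-1),
   and u_3 = 0 unless 4 | n; so u is determined by u_0 - u_1 and, when
   4 | n, by u_3. Conversely e_0 - e_1 and, when 4 | n, a vector with period
   4 along the path are killed by A and orthogonal to e, hence lie in the left
   kernel. *)

Section Krylov.
Variables (R : pzRingType) (n : nat) (A : 'M[R]_n) (e : 'cV[R]_n).

(* Over a field this is membership of v in span {A^k e | k < m}; only this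
   dual form is needed. *)
Definition in_krylov (m : nat) (v : 'cV[R]_n) :=
  forall u : 'rV[R]_n,
  (forall k, (k < m)%N -> u *m (A ^+ k *m e) = 0) -> u *m v = 0.

Lemma in_krylovW m1 m2 v : (m1 <= m2)%N -> in_krylov m1 v -> in_krylov m2 v.
Proof.
by move=> le_m Kv u uK0; apply: Kv => k lt_k; apply: uK0 (leq_trans lt_k le_m).
Qed.

Lemma in_krylov_e m : (0 < m)%N -> in_krylov m e.
Proof. by move=> m_gt0 u /(_ 0%N m_gt0); rewrite expr0 mul1mx. Qed.

Lemma in_krylovD m v w : in_krylov m v -> in_krylov m w -> in_krylov m (v + w).
Proof. by move=> Kv Kw u uK0; rewrite mulmxDr Kv // Kw // addr0. Qed.

Lemma in_krylovN m v : in_krylov m v -> in_krylov m (- v).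
Proof. by move=> Kv u uK0; rewrite mulmxN Kv // oppr0. Qed.

Lemma in_krylov_mull m v : in_krylov m v -> in_krylov m.+1 (A *m v).
Proof.
move=> Kv u uK0; rewrite mulmxA; apply: Kv => k lt_km.
by rewrite -mulmxA (mulmxA A) mulmxE -exprS uK0.
Qed.

End Krylov.

Local Notation ones n := (const_mx 1 : 'cV[rat]_n).

Lemma walk_matrix_mulE n (A : 'M[rat]_n) (u : 'rV[rat]_n) (k : 'I_n) :
  (u *m walk_matrix A) 0 k = (u *m (A ^+ k *m ones n)) 0 0.
Proof. by rewrite !mxE; apply: eq_bigr => j _; rewrite !mxE. Qed.

Lemma walk_matrix_left_kerP n (A : 'M[rat]_n) (u : 'rV[rat]_n) :
  u *m walk_matrix A = 0 <->
  forall k, (k < n)%N -> u *m (A ^+ k *m ones n) = 0.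
Proof.
split=> [uW0 k lt_kn | uK0].
  apply/matrixP => i j.
  by rewrite !ord1 -(walk_matrix_mulE _ _ (Ordinal lt_kn)) uW0 !mxE.
by apply/matrixP => i k; rewrite ord1 walk_matrix_mulE uK0 // !mxE.
Qed.

Lemma left_ker_walk_matrix n (A : 'M[rat]_n) (u : 'rV[rat]_n) :
  u *m A = 0 -> u *m ones n = 0 -> u *m walk_matrix A = 0.
Proof.
move=> uA0 ue0; apply/walk_matrix_left_kerP => -[_|k _].
  by rewrite expr0 mul1mx.
by rewrite exprS -mulmxE -mulmxA mulmxA uA0 mul0mx.
Qed.

Lemma mxrank_retract (F : fieldType) m n r (K : 'M[F]_(m, n))
    (Y : 'M[F]_(r, n)) (P : 'M[F]_(n, r)) (c : F) :
  c != 0 -> Y *m P = c%:M -> (Y <= K)%MS ->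
  (forall u : 'rV[F]_n, (u <= K)%MS -> u *m P = 0 -> u = 0) ->
  \rank K = r.
Proof.
move=> c_neq0 YP sYK PinjK.
have rankY : \rank Y = r.
  apply/eqP; rewrite eqn_leq rank_leq_row /=.
  by have := mxrankM_maxl Y P; rewrite YP -scalemx1 mxrank_scale_nz // mxrank1.
have sKY : (K <= Y)%MS.
  apply/row_subP => i; set u := row i K.
  suff -> : u = (c^-1 *: (u *m P)) *m Y by apply: submxMl.
  apply/eqP; rewrite -subr_eq0; apply/eqP/PinjK.
    by rewrite addmx_sub ?eqmx_opp ?row_sub // (submx_trans (submxMl _ _) sYK).
  by rewrite mulmxBl -mulmxA YP mul_mx_scalar scalerA mulfV // scale1r subrr.
by have := mxrankS sKY; have := mxrankS sYK; rewrite rankY; lia.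
Qed.

(* Vectors are given by integer-valued functions of the vertex index, so that
   identities between them hold entrywise by [lia] after a case split on the
   index. *)
Definition ind (b : bool) : int := (b : nat)%:Z.

Definition cvz n (f : nat -> int) : 'cV[rat]_n := \col_(i < n) (f i)%:~R.
Definition rvz n (f : nat -> int) : 'rV[rat]_n := \row_(i < n) (f i)%:~R.

Lemma cvz_ext n f g : (forall i, (i < n)%N -> f i = g i) -> cvz n f = cvz n g.
Proof. by move=> efg; apply/matrixP => i j; rewrite !mxE efg. Qed.

Lemma cvzD n f g : cvz n f + cvz n g = cvz n (fun i => f i + g i).
Proof. by apply/matrixP => i j; rewrite !mxE intrD. Qed.

Lemma cvzN n f : - cvz n f = cvz n (fun i => - f i).
Proof. by apply/matrixP => i j; rewrite !mxE intrN. Qed.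

Lemma cvz_const1 n : ones n = cvz n (fun _ => 1).
Proof. by apply/matrixP => i j; rewrite !mxE. Qed.

Lemma tr_rvz n f : (rvz n f)^T = cvz n f.
Proof. by apply/matrixP => i j; rewrite !mxE. Qed.

Lemma tr_adjD n : (adjD n)^T = adjD n.
Proof. by apply/matrixP => i j; rewrite !mxE /Dn_adj orbC. Qed.

(* The leaves 0, 1 and the path 3, ..., n-1 hang off vertex 2. *)
Definition Dn_act n (f : nat -> int) (i : nat) : int :=
  if (i < 2)%N then f 2%N
  else if i == 2%N then f 0%N + f 1%N + f 3%N
  else if i == n.-1 then f (n - 2)%N
  else f i.-1 + f i.+1.

Lemma sum_indicator n (g : nat -> rat) (a : nat) : (a < n)%N ->
  \sum_(k < n) ((k : nat) == a)%:R * g k = g a.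
Proof.
move=> lt_an; rewrite (bigD1 (Ordinal lt_an)) //= eqxx mul1r big1 ?addr0 // => k.
by rewrite -val_eqE => /negbTE /= ->; rewrite mul0r.
Qed.

Lemma adjD_cvz n f : (4 <= n)%N -> adjD n *m cvz n f = cvz n (Dn_act n f).
Proof.
move=> n4; apply/matrixP => i j; rewrite !mxE /Dn_act.
under eq_bigr => k _ do rewrite !mxE.
have lt_in := ltn_ord i; have pick := sum_indicator (fun k => (f k)%:~R).
case: ifP => i01.
  have adj k : (Dn_adj i k : nat) = ((k : nat) == 2%N) :> nat.
    by rewrite /Dn_adj /Dn_edge; lia.
  by under eq_bigr => k _ do rewrite adj; rewrite pick //; lia.
case: ifP => i2.
  have adj k : (Dn_adj i k : nat) =
      (((k : nat) == 0%N) + ((k : nat) == 1%N) + ((k : nat) == 3%N))%N.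
    by rewrite /Dn_adj /Dn_edge; lia.
  under eq_bigr => k _ do rewrite adj !natrD !mulrDl.
  by rewrite !big_split /= !pick ?intrD //; lia.
case: ifP => ilast.
  have adj (k : 'I_n) : (Dn_adj i k : nat) = ((k : nat) == (n - 2)%N) :> nat.
    by rewrite /Dn_adj /Dn_edge; have := ltn_ord k; lia.
  by under eq_bigr => k _ do rewrite adj; rewrite pick //; lia.
have adj (k : 'I_n) : (Dn_adj i k : nat) =
    (((k : nat) == i.-1) + ((k : nat) == i.+1))%N.
  by rewrite /Dn_adj /Dn_edge; have := ltn_ord k; lia.
under eq_bigr => k _ do rewrite adj !natrD !mulrDl.
by rewrite !big_split /= !pick ?intrD //; lia.
Qed.

Ltac split_cmp :=
  repeat match goal with
  | |- context [?a == ?b] => case: (ltngtP a b) => ?; try (exfalso; lia)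
  | |- context [(?a < ?b)%N] => case: (ltnP a b) => ?; try (exfalso; lia)
  end.

(* Ae - 2e: all vertices have degree 2 except the leaves 0, 1, n-1 and the
   branch vertex 2. *)
Definition Dn_G n (i : nat) : int :=
  ind (i == 2%N) - ind (i < 2)%N - ind (i == n.-1).

(* Closed form of F_w for 2 <= w <= n-1; at w = n-1 the term e_(w+1) falls
   off the path and e_0 appears instead. *)
Definition Dn_H n w (i : nat) : int :=
  ind (i == w) - ind (i == w.+1) + ind (i == n.+1 - w)%N + ind (i == n - w)%N
  + ind ((i == 0%N) && (w == n.-1)).

Definition Dn_kvec n w : nat -> int :=
  match w with
  | 0 => Dn_G n
  | 1 => fun i => - Dn_G n i
  | _ => Dn_H n w
  end.

Lemma Dn_kvec_H n w : (2 <= w)%N -> Dn_kvec n w = Dn_H n w.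
Proof. by case: w => [|[|w]]. Qed.

Lemma Dn_H_rec n w i : (2 <= w)%N -> (w.+3 <= n)%N -> (i < n)%N ->
  Dn_act n (Dn_H n w.+1) i - Dn_H n w i = Dn_H n w.+2 i.
Proof.
move=> w2 wn lt_in; rewrite /Dn_act.
have [i_bd | i_in] : ((i < 3) || (i == n.-1))%N \/ (3 <= i <= n - 2)%N by lia.
  have : (i = 0 \/ i = 1 \/ i = 2 \/ i = n.-1)%N by lia.
  by case=> [->|[->|[->|->]]]; rewrite /Dn_H; split_cmp; rewrite /ind /=; lia.
rewrite !ifN /Dn_H; [ | lia ..].
have [-> -> ->] : [/\ (i.-1 == 0%N) = false, (i.+1 == 0%N) = false
                    & (i == 0%N) = false] by split; lia.
(* Inside the path, A sends each point mass e_a to e_(a-1) + e_(a+1). *)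
have sh1 : ind (i.-1 == w.+1) + ind (i.+1 == w.+1) =
           ind (i == w.+2) + ind (i == w).
  by rewrite /ind; lia.
have sh2 : ind (i.-1 == w.+2) + ind (i.+1 == w.+2) =
           ind (i == w.+3) + ind (i == w.+1).
  by rewrite /ind; lia.
have sh3 : ind (i.-1 == n.+1 - w.+1)%N + ind (i.+1 == n.+1 - w.+1)%N =
           ind (i == n.+1 - w)%N + ind (i == n.+1 - w.+2)%N.
  by rewrite /ind; lia.
have sh4 : ind (i.-1 == n - w.+1)%N + ind (i.+1 == n - w.+1)%N =
           ind (i == n - w)%N + ind (i == n - w.+2)%N.
  by rewrite /ind; lia.
rewrite /=; lia.
Qed.

Lemma Dn_kvec_rec n w i : (4 <= n)%N -> (w.+3 <= n)%N -> (i < n)%N ->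
  Dn_act n (Dn_kvec n w.+1) i - Dn_kvec n w i = Dn_kvec n w.+2 i.
Proof.
move=> n4 wn lt_in; case: w wn => [|[|w]] wn /=; last exact: Dn_H_rec.
  by rewrite /Dn_act /Dn_G /Dn_H; split_cmp; rewrite /ind /=; lia.
by rewrite opprK /Dn_act /Dn_G /Dn_H; split_cmp; rewrite /ind /=; lia.
Qed.

Lemma cvz_G n : (4 <= n)%N ->
  cvz n (Dn_G n) = adjD n *m ones n - (ones n + ones n).
Proof.
move=> n4; rewrite cvz_const1 adjD_cvz // cvzD cvzN cvzD.
apply: cvz_ext => i lt_in.
by rewrite /Dn_act /Dn_G; split_cmp; rewrite /ind /=; lia.
Qed.

Local Notation Dn_krylov n := (in_krylov (adjD n) (ones n)).

Lemma Dn_krylov_kvec n w : (4 <= n)%N -> (w.+2 <= n)%N ->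
  Dn_krylov n w.+2 (cvz n (Dn_kvec n w)) /\
  Dn_krylov n w.+2 (cvz n (Dn_kvec n w.+1)).
Proof.
move=> n4; elim: w => [|w IH] wn.
  have KG : Dn_krylov n 2 (cvz n (Dn_G n)).
    rewrite cvz_G //; apply/in_krylovD/in_krylovN/in_krylovD.
    - exact/in_krylov_mull/in_krylov_e.
    - exact: in_krylov_e.
    - exact: in_krylov_e.
  by split; last rewrite /= -cvzN; [exact: KG | exact: in_krylovN].
have [K0 K1] := IH (ltnW wn); split; first exact: in_krylovW K1.
have -> : cvz n (Dn_kvec n w.+2) =
    adjD n *m cvz n (Dn_kvec n w.+1) - cvz n (Dn_kvec n w).
  rewrite adjD_cvz // cvzN cvzD.
  by apply: cvz_ext => i lt_in; rewrite Dn_kvec_rec.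
by apply/in_krylovD/in_krylovN; [exact: in_krylov_mull | exact: in_krylovW K0].
Qed.

Definition dotz n (u : 'rV[rat]_n) (f : nat -> int) : rat :=
  \sum_(i < n) u 0 i * (f i)%:~R.

(* [entry u a = 0] for [a >= n]. *)
Definition entry n (u : 'rV[rat]_n) (a : nat) : rat :=
  dotz u (fun i => ind (i == a)).

Lemma dotzE n (u : 'rV[rat]_n) f : (u *m cvz n f) 0 0 = dotz u f.
Proof. by rewrite !mxE; apply: eq_bigr => i _; rewrite !mxE. Qed.

Lemma entry_lt n (u : 'rV[rat]_n) a (lt_an : (a < n)%N) :
  entry u a = u 0 (Ordinal lt_an).
Proof.
rewrite /entry /dotz (bigD1 (Ordinal lt_an)) //= eqxx mulr1 big1 ?addr0 // => k.
by rewrite -val_eqE => /negbTE /= ->; rewrite mulr0.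
Qed.

Lemma entry_ord n (u : 'rV[rat]_n) (i : 'I_n) : entry u i = u 0 i.
Proof. by rewrite (entry_lt u (ltn_ord i)); congr (u 0 _); apply: val_inj. Qed.

Lemma entry_rvz n f a : (a < n)%N -> entry (rvz n f) a = (f a)%:~R.
Proof. by move=> lt_an; rewrite (entry_lt _ lt_an) mxE. Qed.

Lemma dotz_G n (u : 'rV[rat]_n) :
  dotz u (Dn_G n) = entry u 2%N - entry u 0%N - entry u 1%N - entry u n.-1.
Proof.
rewrite /entry /dotz -!sumrB; apply: eq_bigr => i _; rewrite /Dn_G.
have -> : ind (i < 2)%N = ind ((i : nat) == 0%N) + ind ((i : nat) == 1%N).
  by rewrite /ind; lia.
by rewrite !(intrD, intrB); ring.
Qed.

Lemma dotz_H n (u : 'rV[rat]_n) w : w != n.-1 ->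
  dotz u (Dn_H n w) =
  entry u w - entry u w.+1 + entry u (n.+1 - w)%N + entry u (n - w)%N.
Proof.
move=> wn; rewrite /entry /dotz -!sumrB -!big_split /=; apply: eq_bigr => i _.
by rewrite /Dn_H (negbTE wn) andbF !(intrD, intrB) /ind /=; ring.
Qed.

Lemma dotz_Hlast n (u : 'rV[rat]_n) : (4 <= n)%N ->
  dotz u (Dn_H n n.-1) = entry u 0%N + entry u 1%N + entry u 2%N + entry u n.-1.
Proof.
move=> n4; rewrite /entry /dotz -!big_split /=; apply: eq_bigr => i _.
have -> : Dn_H n n.-1 i = ind ((i : nat) == 0%N) + ind ((i : nat) == 1%N)
    + ind ((i : nat) == 2%N) + ind ((i : nat) == n.-1).
  by rewrite /Dn_H /ind; have := ltn_ord i; lia.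
by rewrite !intrD; ring.
Qed.

Definition sgn4 (v : nat) : rat :=
  if (v %% 4 == 3)%N then 1 else if (v %% 4 == 1)%N then -1 else 0.

Lemma sgn4S2 v : sgn4 v.+2 = - sgn4 v.
Proof.
rewrite /sgn4 -addn2 -modnDml.
by case: (v %% 4)%N (ltn_pmod v (isT : (0 < 4)%N)) => [|[|[|[|r]]]] //= _;
  rewrite ?oppr0 ?opprK.
Qed.

Section MirrorRelations.
Variables (n : nat) (x : nat -> rat).
Hypotheses (n4 : (4 <= n)%N)
  (relG : x 2%N - x 0%N - x 1%N - x n.-1 = 0)
  (relL : x 0%N + x 1%N + x 2%N + x n.-1 = 0)
  (relH : forall w, (2 <= w <= n - 2)%N ->
          x w - x w.+1 + x (n.+1 - w)%N + x (n - w)%N = 0).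

Lemma mirror_x2_eq0 : x 2%N = 0.
Proof. by move: relG relL; lra. Qed.

(* Add and subtract the relations for w and n - w. *)
Lemma mirror_reflect w : (2 <= w <= n - 2)%N ->
  x w = - x (n - w)%N /\ x w.+1 = x (n.+1 - w)%N.
Proof.
move=> w_in; have := relH w_in; have := @relH (n - w)%N ltac:(lia).
have [-> -> ->] : [/\ (n - (n - w) = w)%N, (n.+1 - (n - w) = w.+1)%N
                   & ((n - w).+1 = n.+1 - w)%N] by split; lia.
by move=> e1 e2; split; lra.
Qed.

Lemma mirror_rec v : (4 <= v < n)%N -> x v = - x (v - 2)%N.
Proof.
move=> v_in; have [_ e1] := @mirror_reflect v.-1 ltac:(lia).
have [e2 _] := @mirror_reflect (v - 2)%N ltac:(lia).
have [vE nvE] : v.-1.+1 = v /\ (n.+1 - v.-1 = n - (v - 2))%N by split; lia.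
by rewrite e2 opprK -nvE -e1 vE.
Qed.

Lemma mirror_sgn4 v : (2 <= v < n)%N -> x v = x 3%N * sgn4 v.
Proof.
elim/ltn_ind: v => v IH v_in; case: (ltnP v 4) => [lt_v4 | le4v].
  have [->|->] : v = 2%N \/ v = 3%N by lia.
    by rewrite mirror_x2_eq0 /sgn4 /= mulr0.
  by rewrite /sgn4 /= mulr1.
have sgn_v : sgn4 v = - sgn4 (v - 2)%N by rewrite -sgn4S2 -addn2 subnK //; lia.
rewrite mirror_rec ?sgn_v ?mulrN; last by lia.
by rewrite IH //; lia.
Qed.

Lemma mirror_x3_eq0 : ~~ (4 %| n)%N -> x 3%N = 0.
Proof.
move=> n_ndiv4; have [] := @mirror_reflect 3 ltac:(lia).
rewrite (@mirror_sgn4 (n - 3)%N) /sgn4; last by lia.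
case: ifP => _; first by lra.
case: ifP => [n3_1 | _]; first by exfalso; lia.
by rewrite mulr0 oppr0.
Qed.

Lemma mirror_eq0 :
  x 0%N = x 1%N -> x 3%N = 0 -> forall i, (i < n)%N -> x i = 0.
Proof.
move=> x01 x3 i lt_in.
have xv v : (2 <= v < n)%N -> x v = 0.
  by move=> v_in; rewrite mirror_sgn4 // x3 mul0r.
have x_last : x n.-1 = 0 by apply: xv; lia.
have [->|[->|i2]] : (i = 0 \/ i = 1 \/ 2 <= i)%N by lia.
- by move: relL; rewrite mirror_x2_eq0 x_last x01; lra.
- by move: relL; rewrite mirror_x2_eq0 x_last x01; lra.
- by apply: xv; lia.
Qed.

End MirrorRelations.

Local Notation W n := (walk_matrix (adjD n)).

Lemma Dn_left_ker_kvec n (u : 'rV[rat]_n) w : (4 <= n)%N -> (w < n)%N ->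
  u *m W n = 0 -> dotz u (Dn_kvec n w) = 0.
Proof.
move=> n4 lt_wn /walk_matrix_left_kerP uK0.
have Kw : Dn_krylov n n (cvz n (Dn_kvec n w)).
  case: w lt_wn => [|w] lt_wn.
    by apply: in_krylovW (@Dn_krylov_kvec n 0 n4 _).1; lia.
  exact: in_krylovW (Dn_krylov_kvec n4 lt_wn).2.
by rewrite -dotzE Kw // mxE.
Qed.

Lemma Dn_left_ker_rels n (u : 'rV[rat]_n) : (4 <= n)%N -> u *m W n = 0 ->
  [/\ entry u 2%N - entry u 0%N - entry u 1%N - entry u n.-1 = 0,
      entry u 0%N + entry u 1%N + entry u 2%N + entry u n.-1 = 0 &
      forall w, (2 <= w <= n - 2)%N ->
        entry u w - entry u w.+1 + entry u (n.+1 - w)%N + entry u (n - w)%N = 0].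
Proof.
move=> n4 uW0; split.
- by rewrite -dotz_G (@Dn_left_ker_kvec n u 0 n4 ltac:(lia) uW0).
- rewrite -dotz_Hlast // -Dn_kvec_H; last by lia.
  by apply: (Dn_left_ker_kvec n4 _ uW0); lia.
- move=> w w_in; rewrite -dotz_H; last by lia.
  rewrite -Dn_kvec_H; last by lia.
  by apply: (Dn_left_ker_kvec n4 _ uW0); lia.
Qed.

Lemma Dn_left_ker_eq0 n (u : 'rV[rat]_n) : (4 <= n)%N -> u *m W n = 0 ->
  entry u 0%N = entry u 1%N -> entry u 3%N = 0 -> u = 0.
Proof.
move=> n4 uW0 e01 e3; have [rG rL rH] := Dn_left_ker_rels n4 uW0.
apply/rowP => i; rewrite mxE -entry_ord.
exact: (mirror_eq0 n4 rG rL rH e01 e3 (ltn_ord i)).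
Qed.

Lemma Dn_left_ker_entry3 n (u : 'rV[rat]_n) : (4 <= n)%N -> ~~ (4 %| n)%N ->
  u *m W n = 0 -> entry u 3%N = 0.
Proof.
move=> n4 n_ndiv4 uW0; have [rG rL rH] := Dn_left_ker_rels n4 uW0.
exact: (mirror_x3_eq0 n4 rG rL rH n_ndiv4).
Qed.

Lemma Dn_rvz_left_ker n f : (4 <= n)%N ->
  (forall i, (i < n)%N -> Dn_act n f i = 0) ->
  f 2%N - f 0%N - f 1%N - f n.-1 = 0 ->
  rvz n f *m W n = 0.
Proof.
move=> n4 f_act0 fG0.
have fA0 : rvz n f *m adjD n = 0.
  apply: trmx_inj; rewrite trmx_mul tr_adjD tr_rvz adjD_cvz // trmx0.
  by apply/matrixP => i j; rewrite !mxE f_act0.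
(* u A = 0 turns u (Ae - 2e) = 0 into u e = 0. *)
have fe0 : rvz n f *m ones n = 0.
  have : (rvz n f *m cvz n (Dn_G n)) 0 0 = 0.
    by rewrite dotzE dotz_G !entry_rvz -?intrB ?fG0 //; lia.
  rewrite cvz_G // mulmxBr mulmxA fA0 mul0mx sub0r mulmxDr !mxE => e.
  by apply/matrixP => i j; rewrite !ord1 [RHS]mxE; move: e; rewrite !mxE; lra.
exact: left_ker_walk_matrix.
Qed.

Definition Dn_null1 (i : nat) : int := ind (i == 0%N) - ind (i == 1%N).

(* (-1, -1, 0, 2, 0, -2, 0, 2, ...): killed by A, and orthogonal to e exactly
   when 4 | n. *)
Definition Dn_null2 (i : nat) : int :=
  2 * ind (i %% 4 == 3)%N - 2 * ind ((i %% 4 == 1) && (2 <= i))%N - ind (i < 2)%N.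

Lemma Dn_null1_ker n : (4 <= n)%N -> rvz n Dn_null1 *m W n = 0.
Proof.
move=> n4; apply: Dn_rvz_left_ker => // [i lt_in|];
  rewrite /Dn_act /Dn_null1; split_cmp; rewrite /ind /=; lia.
Qed.

Lemma Dn_null2_ker n : (4 <= n)%N -> (4 %| n)%N -> rvz n Dn_null2 *m W n = 0.
Proof.
move=> n4 n_div4; apply: Dn_rvz_left_ker => // [i lt_in|];
  rewrite /Dn_act /Dn_null2; split_cmp; rewrite /ind /=; lia.
Qed.

Lemma mul_rvz_cvz n f g : rvz n f *m cvz n g = (dotz (rvz n f) g)%:M.
Proof. by rewrite [LHS]mx11_scalar dotzE. Qed.

Lemma dotz_null1 n (u : 'rV[rat]_n) :
  dotz u Dn_null1 = entry u 0%N - entry u 1%N.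
Proof.
rewrite /entry /dotz -sumrB; apply: eq_bigr => i _.
by rewrite /Dn_null1 intrB mulrBr.
Qed.

Lemma Dn_left_ker_rank_div4 n : (4 <= n)%N -> (4 %| n)%N ->
  \rank (kermx (W n)) = 2%N.
Proof.
move=> n4 n_div4.
apply: (@mxrank_retract _ _ _ _ _
  (col_mx (rvz n Dn_null1) (rvz n Dn_null2))
  (row_mx (cvz n Dn_null1) (cvz n (fun i => ind (i == 3%N)))) 2) => //.
- rewrite mul_col_row !mul_rvz_cvz !dotz_null1 -!/(entry _ 3).
  rewrite !entry_rvz; [ | lia ..].
  rewrite [RHS]scalar_mx_block; congr block_mx; apply/matrixP => i j;
    by rewrite !ord1 !mxE /Dn_null1 /Dn_null2 /ind /= ?subrr ?mulr0z ?mul0rn.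
- by rewrite col_mx_sub !sub_kermx Dn_null1_ker ?Dn_null2_ker ?eqxx.
- move=> u; rewrite sub_kermx mul_mx_row => /eqP uW0 /eqP.
  rewrite row_mx_eq0 => /andP[/eqP u1 /eqP u3].
  apply: Dn_left_ker_eq0 n4 uW0 _ _; apply/eqP.
  + by rewrite -subr_eq0 -dotz_null1 -dotzE u1 mxE.
  + by rewrite /entry -dotzE u3 mxE.
Qed.

Lemma Dn_left_ker_rank_ndiv4 n : (4 <= n)%N -> ~~ (4 %| n)%N ->
  \rank (kermx (W n)) = 1%N.
Proof.
move=> n4 n_ndiv4.
apply: (@mxrank_retract _ _ _ _ _ (rvz n Dn_null1) (cvz n Dn_null1) 2) => //.
- by rewrite mul_rvz_cvz dotz_null1 !entry_rvz; [rewrite /Dn_null1 /ind | lia ..].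
- by rewrite sub_kermx Dn_null1_ker ?eqxx.
- move=> u; rewrite sub_kermx => /eqP uW0 u1.
  apply: Dn_left_ker_eq0 n4 uW0 _ (Dn_left_ker_entry3 n4 n_ndiv4 uW0).
  by apply/eqP; rewrite -subr_eq0 -dotz_null1 -dotzE u1 mxE.
Qed.

Theorem mainTheorem2 (n : nat) (hn : (4 <= n)%N) :
  \rank (walk_matrix (adjD n)) = (if (4 %| n)%N then n - 2 else n - 1)%N.
Proof.
have := mxrank_ker (walk_matrix (adjD n)).
have := rank_leq_row (walk_matrix (adjD n)).
case: ifP => [n_div4 | /negbT n_ndiv4].
  by rewrite Dn_left_ker_rank_div4 //; lia.
by rewrite Dn_left_ker_rank_ndiv4 //; lia.
Qed.
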